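(* Let $T_{ab}$ be a rank-2 tensor. (a) The following are equivalent: $T_{ac}T_b{}^c=0$; $T_a{}^b$ is a singular null-cone preserving map; $T_{ab}=s_ak_b$ for some covector $s$ and null covector $k$. (b) The following are equivalent: $T_{ac}T_b{}^c=0$ and $T_{ca}T^c{}_b=0$; $T_a{}^b$ is a singular null-cone bi-preserving map; $T_{ab}=n_ak_b$ for null covectors $n,k$ (or $T=0$). In case (b), $T_{ab}\in\mathcal{DP}\cup-\mathcal{DP}$.
   Context: Lorentzian metric $g_{ab}$ of signature $(+,-,\dots,-)$, dimension $N\ge3$, with a time orientation; null: $v\neq0$, $v_av^a=0$. $T_a{}^b$ is null-cone preserving if $k^aT_a{}^b$ is null or zero for all null $k$; bi-preserving if moreover $T_a{}^bk_b$ is null or zero for all null $k$; singular if $\det(T_a{}^b)=0$. $\mathcal{DP}$: rank-2 tensors with $T_{ab}u^av^b\ge0$ for all causal (nonzero, $v\cdot v\ge0$) future-pointing $u,v$; $-\mathcal{DP}$ its negatives. *)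

From HB Require Import structures.
From mathcomp Require Import all_boot all_order all_algebra.
From mathcomp Require Import reals.
Set Implicit Arguments. Unset Strict Implicit. Unset Printing Implicit Defensive.
Import Order.TTheory GRing.Theory Num.Theory.
Local Open Scope ring_scope.

Section Lorentz.
Variables (R : realType) (N : nat).

(* Vectors (upper index) and covectors (lower index) are both represented
   as row vectors 'rV_N of components; rank-2 tensors T_{ab} as 'M_N with
   T a b = T_{ab}. *)

Definition bil (A : 'M[R]_N) (u v : 'rV[R]_N) : R := (u *m A *m v^T) ord0 ord0.

Definition eta : 'M[R]_N :=
  diag_mx (\row_(i < N) (if nat_of_ord i == 0%N then 1 else -1)).

(* g_{ab} is a Lorentzian metric of signature (+,-,...,-):
   symmetric and congruent to eta (Sylvester). *)
Definition lorentzian (g : 'M[R]_N) : Prop :=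
  g^T = g /\ exists P : 'M[R]_N, P \in unitmx /\ g = P^T *m eta *m P.

Definition ginv (g : 'M[R]_N) : 'M[R]_N := invmx g.

Definition timelike (g : 'M[R]_N) (v : 'rV[R]_N) : Prop := 0 < bil g v v.

Definition null_vec (g : 'M[R]_N) (v : 'rV[R]_N) : Prop :=
  v != 0 /\ bil g v v = 0.

Definition null_cov (g : 'M[R]_N) (k : 'rV[R]_N) : Prop :=
  k != 0 /\ bil (ginv g) k k = 0.

(* time orientation given by a timelike vector tau; a causal vector v
   (v <> 0, g(v,v) >= 0) is future-pointing iff g(tau, v) > 0 *)
Definition future_causal (g : 'M[R]_N) (tau v : 'rV[R]_N) : Prop :=
  v != 0 /\ 0 <= bil g v v /\ 0 < bil g tau v.

(* mixed tensor T_a^b = T_{ac} g^{cb} *)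
Definition mixed (g T : 'M[R]_N) : 'M[R]_N := T *m ginv g.

Definition null_cone_preserving (g T : 'M[R]_N) : Prop :=
  forall k, null_vec g k ->
    bil g (k *m mixed g T) (k *m mixed g T) = 0.

Definition null_cone_bi_preserving (g T : 'M[R]_N) : Prop :=
  null_cone_preserving g T /\
  forall k, null_cov g k ->
    bil (ginv g) (mixed g T *m k^T)^T (mixed g T *m k^T)^T = 0.

Definition singular (g T : 'M[R]_N) : Prop := \det (mixed g T) = 0.

Definition outer (s k : 'rV[R]_N) : 'M[R]_N := s^T *m k.

(* T_{ac} T_b^c = T_{ac} g^{cd} T_{bd} *)
Definition TTt (g T : 'M[R]_N) : 'M[R]_N := T *m ginv g *m T^T.
(* T_{ca} T^c_b = g^{cd} T_{da} T_{cb} *)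
Definition TtT (g T : 'M[R]_N) : 'M[R]_N := T^T *m ginv g *m T.

Definition DP (g : 'M[R]_N) (tau : 'rV[R]_N) (T : 'M[R]_N) : Prop :=
  forall u v, future_causal g tau u -> future_causal g tau v ->
    0 <= bil T u v.

End Lorentz.

From Pilot Require Import Defs.
From HB Require Import structures.
From mathcomp Require Import all_boot all_order all_algebra.
From mathcomp Require Import reals sesquilinear.
From mathcomp Require Import ring lra.
Set Implicit Arguments. Unset Strict Implicit. Unset Printing Implicit Defensive.
Import Order.TTheory GRing.Theory Num.Theory.
Local Open Scope ring_scope.

(** Everything reduces to one fact about the Minkowski form [eta] in an
    orthonormal frame [g = P^T eta P]: a nonzero vector with vanishing time
    component is spacelike.  Consequently two orthogonal null vectors are
    parallel, a quadratic form vanishing on the null cone is a multiple of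
    [eta], and the sign of the time component tells in which half of the
    causal cone a vector lies.

    [T_ac T_b^c] is symmetric, has determinant [det(T)^2 det(g^-1)], and its
    value at a null [k] is the square of [k^a T_a^b]; so it vanishes exactly
    when [T] is singular and null-cone preserving.  Its vanishing also says
    that the rows of [T] are mutually orthogonal null covectors, hence all
    multiples of one of them, i.e. [T = s (x) k].  Adding [T_ca T^c_b = 0]
    makes [s] null as well, and then [T(u, v) = (u.s)(v.k)] where each factor
    has, on future causal vectors, the fixed sign of its value at [tau]. *)

Section BilinearForm.
Variables (R : realType) (N : nat).
Implicit Types (A : 'M[R]_N) (u v w : 'rV[R]_N).

Lemma bil_form A u v : bil A u v = form idfun A u v.
Proof. by rewrite /form map_mx_id. Qed.

Lemma bilDl A u v w : bil A (u + v) w = bil A u w + bil A v w.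
Proof. by rewrite !bil_form formDl. Qed.

Lemma bilDr A u v w : bil A u (v + w) = bil A u v + bil A u w.
Proof. by rewrite !bil_form formDr. Qed.

Lemma bilZl A a u v : bil A (a *: u) v = a * bil A u v.
Proof. by rewrite !bil_form formZl. Qed.

Lemma bilZr A a u v : bil A u (a *: v) = a * bil A u v.
Proof. by rewrite !bil_form formZr. Qed.

Lemma bilNl A u v : bil A (- u) v = - bil A u v.
Proof. by rewrite !bil_form formNl. Qed.

Lemma bilNr A u v : bil A u (- v) = - bil A u v.
Proof. by rewrite !bil_form formNr. Qed.

Lemma bilee A i j : bil A 'e_i 'e_j = A i j.
Proof. by rewrite bil_form formee. Qed.

Lemma bil0 u v : bil 0 u v = 0.
Proof. by rewrite bil_form form0_eq0. Qed.

Lemma bilN A u v : bil (- A) u v = - bil A u v.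
Proof. by rewrite /bil mulmxN mulNmx mxE. Qed.

Lemma bilC A u v : A^T = A -> bil A u v = bil A v u.
Proof.
move=> sA; rewrite /bil -[u *m A *m v^T]trmxK mxE.
by rewrite !trmx_mul trmxK sA mulmxA.
Qed.

Lemma bil_congr (P A : 'M[R]_N) u v :
  bil (P^T *m A *m P) u v = bil A (u *m P^T) (v *m P^T).
Proof. by rewrite /bil trmx_mul trmxK !mulmxA. Qed.

Lemma bil_row (A B C : 'M[R]_N) i j :
  bil B (row i A) (row j C) = (A *m B *m C^T) i j.
Proof.
rewrite /bil !mxE; apply: eq_bigr => k _; rewrite !mxE; congr (_ * _).
by apply: eq_bigr => l _; rewrite !mxE.
Qed.

End BilinearForm.

Section Minkowski.
Variables (R : realType) (n : nat).
Local Notation eta := (Defs.eta R n.+1).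
Implicit Types (Q : 'M[R]_n.+1) (t u v w : 'rV[R]_n.+1).

Lemma eta_diag (i j : 'I_n.+1) :
  eta i j = (i == j)%:R * (if i == 0 then 1 else -1).
Proof. by rewrite !mxE mulr_natl. Qed.

Lemma trmx_eta : eta^T = eta.
Proof. exact: tr_diag_mx. Qed.

Lemma eta_mulmx_eta : eta *m eta = 1%:M.
Proof.
apply/matrixP => i j; rewrite mul_diag_mx !mxE.
case: (i == j); rewrite ?mulr0n ?mulr0 // mulr1n.
by case: (_ == _); rewrite ?mulr1 // mulrNN mulr1.
Qed.

Lemma eta_unit : eta \in unitmx.
Proof. by case: (mulmx1_unit eta_mulmx_eta). Qed.

Lemma bil_eta_sqr w : bil eta w w = 2 * w 0 0 ^+ 2 - \sum_j w 0 j ^+ 2.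
Proof.
apply/eqP; rewrite eq_sym subr_eq; apply/eqP.
rewrite /bil mul_mx_diag !mxE -big_split (bigD1 ord0) //=.
rewrite big1 => [|j /negPf j0].
  by rewrite !mxE eqxx addr0; ring.
by rewrite !mxE (j0 : (nat_of_ord j == 0%N) = false); ring.
Qed.

Lemma eta_time0_lt0 w : w 0 0 = 0 -> w != 0 -> bil eta w w < 0.
Proof.
move=> w0 nz_w; rewrite bil_eta_sqr w0 expr0n /= mulr0 sub0r oppr_lt0.
rewrite lt_def psumr_neq0 => [|j _]; last exact: sqr_ge0.
apply/andP; split; last by apply: sumr_ge0 => j _; exact: sqr_ge0.
apply/hasP; have /rV0Pn[j wj] := nz_w.
by exists j; rewrite ?mem_index_enum //= lt0r sqrf_eq0 wj sqr_ge0.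
Qed.

Lemma eta_time0_le0 w : w 0 0 = 0 -> bil eta w w <= 0.
Proof.
move=> w0; have [->|nz_w] := eqVneq w 0; last exact/ltW/eta_time0_lt0.
by rewrite /bil !mul0mx mxE.
Qed.

Lemma eta_causal_time_neq0 w : 0 <= bil eta w w -> w != 0 -> w 0 0 != 0.
Proof.
move=> wge0 nz_w; apply/eqP => w0.
by have := eta_time0_lt0 w0 nz_w; rewrite ltNge wge0.
Qed.

Lemma eta_null_orth_parallel u v :
  bil eta u u = 0 -> bil eta v v = 0 -> bil eta u v = 0 -> u != 0 ->
  v = (v 0 0 / u 0 0) *: u.
Proof.
move=> uu vv uv nz_u; have u0 : u 0 0 != 0 by rewrite eta_causal_time_neq0 ?uu.
set w := v - (v 0 0 / u 0 0) *: u.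
have w0 : w 0 0 = 0 by rewrite !mxE divfK ?subrr.
have ww : bil eta w w = 0.
  rewrite !(bilDl, bilDr, bilNl, bilNr, bilZl, bilZr) (bilC v u trmx_eta).
  by rewrite uu vv uv; ring.
apply/eqP; rewrite -subr_eq0 -/w; apply/negPn/negP => nz_w.
by have := eta_time0_lt0 w0 nz_w; rewrite ww ltxx.
Qed.

(* Expand [bil eta w w <= 0] at [w = v0 u - u0 v], of time component 0. *)
Lemma eta_time_cross_ge u v :
  v 0 0 ^+ 2 * bil eta u u + u 0 0 ^+ 2 * bil eta v v <=
  2 * (u 0 0 * v 0 0) * bil eta u v.
Proof.
set w := v 0 0 *: u - u 0 0 *: v.
have w0 : w 0 0 = 0 by rewrite !mxE mulrC subrr.
have := eta_time0_le0 w0.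
rewrite !(bilDl, bilDr, bilNl, bilNr, bilZl, bilZr) (bilC v u trmx_eta).
by rewrite -subr_ge0 => ?; rewrite -subr_ge0; lra.
Qed.

Lemma eta_causal_mul_ge0 u v : 0 <= bil eta u u -> 0 <= bil eta v v ->
  0 <= bil eta u v * (u 0 0 * v 0 0).
Proof.
move=> uu vv; have := eta_time_cross_ge u v.
have := sqr_ge0 (u 0 0); have := sqr_ge0 (v 0 0); nra.
Qed.

Lemma eta_timelike_mul_gt0 t u : 0 < bil eta t t -> 0 <= bil eta u u ->
  u != 0 -> 0 < bil eta t u * (t 0 0 * u 0 0).
Proof.
move=> tt uu nz_u; have := eta_time_cross_ge t u.
have : 0 < u 0 0 ^+ 2 by rewrite lt0r sqrf_eq0 eta_causal_time_neq0 ?sqr_ge0.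
have := sqr_ge0 (t 0 0); nra.
Qed.

Lemma eta_null_future_sign t w u :
  0 < bil eta t t -> bil eta w w = 0 -> w != 0 ->
  0 <= bil eta u u -> u != 0 -> 0 < bil eta t u ->
  0 <= bil eta u w * bil eta t w.
Proof.
move=> tt ww nz_w uu nz_u tu.
have ww' : 0 <= bil eta w w by rewrite ww.
have w0 : 0 < w 0 0 ^+ 2 by rewrite lt0r sqrf_eq0 eta_causal_time_neq0 ?sqr_ge0.
have tu0 := eta_timelike_mul_gt0 tt uu nz_u.
have tw0 := eta_timelike_mul_gt0 tt ww' nz_w.
have uw0 := eta_causal_mul_ge0 uu ww'.
have t0u0 : 0 < t 0 0 * u 0 0 by rewrite -(pmulr_rgt0 _ tu).
have : 0 <= (bil eta u w * bil eta t w) * (w 0 0 ^+ 2 * (t 0 0 * u 0 0)).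
  rewrite (_ : _ * _ =
      (bil eta u w * (u 0 0 * w 0 0)) * (bil eta t w * (t 0 0 * w 0 0))).
    exact: mulr_ge0 uw0 (ltW tw0).
  by ring.
by rewrite pmulr_lge0 // mulr_gt0.
Qed.

(* Test [Q] on the null vectors [e0 +- ej] and [5 e0 + 3 ej + 4 ek]. *)
Lemma eta_null_cone_form Q : Q^T = Q ->
  (forall x, x != 0 -> bil eta x x = 0 -> bil Q x x = 0) -> Q = Q 0 0 *: eta.
Proof.
move=> sQ Qnull; have QC i j : Q j i = Q i j by rewrite -[in LHS]sQ mxE.
pose x a b c (j k : 'I_n.+1) : 'rV[R]_n.+1 := a *: 'e_0 + b *: 'e_j + c *: 'e_k.
have bil_x A a b c j k : bil A (x a b c j k) (x a b c j k) =
      a * a * A 0 0 + a * b * A 0 j + a * c * A 0 k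
    + b * a * A j 0 + b * b * A j j + b * c * A j k
    + c * a * A k 0 + c * b * A k j + c * c * A k k.
  by rewrite !(bilDl, bilDr, bilZl, bilZr) !bilee; ring.
have Qx a b c j k : a != 0 -> j != 0 -> k != 0 -> (c = 0 \/ j != k) ->
    a ^+ 2 = b ^+ 2 + c ^+ 2 -> bil Q (x a b c j k) (x a b c j k) = 0.
  move=> nz_a nz_j nz_k jk abc.
  have [j0 k0] : (0 == j) = false /\ (0 == k) = false.
    by rewrite !(eq_sym 0) (negPf nz_j) (negPf nz_k).
  apply: Qnull.
    apply: contraNneq nz_a => /rowP/(_ 0).
    by rewrite !mxE /= j0 k0 mulr1 !mulr0 !addr0 => ->.
  rewrite bil_x !eta_diag !eqxx j0 k0 (negPf nz_j) (negPf nz_k).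
  case: jk => [c0|/negPf jk]; last rewrite jk eq_sym jk.
    by rewrite c0 expr0n addr0 !expr2 in abc; rewrite c0 ?(mulr1n, mulr0n); lra.
  by rewrite !expr2 in abc; rewrite ?(mulr1n, mulr0n); lra.
have Q0j j : j != 0 -> Q 0 j = 0 /\ Q j j = - Q 0 0.
  move=> nz_j; have c0 : (0 : R) = 0 \/ j != j by left.
  have := Qx 1 1 0 j j (oner_neq0 _) nz_j nz_j c0.
  have := Qx 1 (-1) 0 j j (oner_neq0 _) nz_j nz_j c0.
  rewrite !bil_x (QC 0 j) sqrrN expr0n addr0 => /(_ erefl) h1 /(_ erefl) h2.
  by split; lra.
have Qjk j k : j != 0 -> k != 0 -> j != k -> Q j k = 0.
  move=> nz_j nz_k jk; have [[Q0j' Qjj] [Q0k Qkk]] := (Q0j j nz_j, Q0j k nz_k).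
  have nz5 : (5 : R) != 0 by rewrite pnatr_eq0.
  have pyth : (5 : R) ^+ 2 = 3 ^+ 2 + 4 ^+ 2 by rewrite !expr2; lra.
  have := Qx 5 3 4 j k nz5 nz_j nz_k (or_intror jk) pyth.
  by rewrite bil_x (QC 0 j) (QC 0 k) (QC j k) Q0j' Q0k Qjj Qkk; lra.
apply/matrixP => i j; rewrite mxE eta_diag.
have [-> | nz_i] := eqVneq i 0; have [-> | nz_j] := eqVneq j 0.
- by rewrite mulr1n !mulr1.
- by rewrite mulr0n mul0r mulr0 (Q0j j nz_j).1.
- by rewrite (negPf nz_i) mul0r mulr0 QC (Q0j i nz_i).1.
have [<- | ij] := eqVneq i j; last by rewrite mul0r mulr0 Qjk.
by rewrite (Q0j i nz_i).2 mulr1n mul1r mulrN1.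
Qed.

Lemma eta_null_exists : (0 < n)%N -> exists2 x, x != 0 & bil eta x x = 0.
Proof.
move=> n_gt0; pose i1 : 'I_n.+1 := Ordinal (n_gt0 : (1 < n.+1)%N).
exists ('e_0 + 'e_i1).
  by apply/eqP => /rowP/(_ 0); rewrite !mxE /=; lra.
rewrite !(bilDl, bilDr) !bilee !eta_diag /=; lra.
Qed.

End Minkowski.

Lemma mulmx_unit_eq0 (F : fieldType) m n (x : 'M[F]_(m, n)) (A : 'M_n) :
  A \in unitmx -> (x *m A == 0) = (x == 0).
Proof. by rewrite -row_free_unit; exact: mulmx_free_eq0. Qed.

Section Metric.
Variables (R : realType) (N : nat) (g : 'M[R]_N).
Hypotheses (g_sym : g^T = g) (g_inv : g \in unitmx).
Local Notation gi := (ginv g).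
Implicit Types (T : 'M[R]_N) (k m u v : 'rV[R]_N).

Lemma trmx_ginv : gi^T = gi.
Proof. by rewrite /ginv trmx_inv g_sym. Qed.

Lemma mulmx_ginv : g *m gi = 1%:M.
Proof. exact: mulmxV. Qed.

Lemma ginv_mulmx : gi *m g = 1%:M.
Proof. exact: mulVmx. Qed.

Lemma ginv_unit : gi \in unitmx.
Proof. by rewrite unitmx_inv. Qed.

Lemma det_ginv_neq0 : \det gi != 0.
Proof. by rewrite -unitfE -unitmxE ginv_unit. Qed.

Lemma singularE T : singular g T <-> \det T = 0.
Proof.
rewrite /singular /mixed det_mulmx; split=> [/eqP|->]; last by rewrite mul0r.
by rewrite mulf_eq0 (negPf det_ginv_neq0) orbF => /eqP.
Qed.

Lemma det_TTt T : \det (TTt g T) = \det T ^+ 2 * \det gi.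
Proof. by rewrite /TTt !det_mulmx det_tr; ring. Qed.

Lemma det_TtT T : \det (TtT g T) = \det T ^+ 2 * \det gi.
Proof. by rewrite /TtT !det_mulmx det_tr; ring. Qed.

Lemma trmx_TTt T : (TTt g T)^T = TTt g T.
Proof. by rewrite /TTt !trmx_mul trmxK trmx_ginv mulmxA. Qed.

Lemma trmx_TtT T : (TtT g T)^T = TtT g T.
Proof. by rewrite /TtT !trmx_mul trmxK trmx_ginv mulmxA. Qed.

Lemma bil_mixed T k :
  bil g (k *m mixed g T) (k *m mixed g T) = bil (TTt g T) k k.
Proof.
rewrite /bil /mixed /TTt !trmx_mul trmx_ginv !mulmxA.
by rewrite -(mulmxA _ g) mulmx_ginv mulmx1.
Qed.

Lemma bil_mixed_cov T k :
  bil gi (mixed g T *m k^T)^T (mixed g T *m k^T)^T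
  = bil (TtT g T) (k *m gi) (k *m gi).
Proof. by rewrite /bil /mixed /TtT !trmx_mul !trmxK !trmx_ginv !mulmxA. Qed.

Lemma null_cov_raise k : null_cov g k -> null_vec g (k *m gi).
Proof.
case=> nz_k kk; split.
  by rewrite mulmx_unit_eq0 ?ginv_unit.
by rewrite /bil trmx_mul trmx_ginv !mulmxA -(mulmxA k gi g) ginv_mulmx mulmx1.
Qed.

Lemma null_vec_lower v : null_vec g v -> null_cov g (v *m g).
Proof.
case=> nz_v vv; split.
  by rewrite mulmx_unit_eq0.
by rewrite /bil trmx_mul g_sym !mulmxA -(mulmxA _ g gi) mulmx_ginv mulmx1.
Qed.

Lemma TTt_outer m k : TTt g (outer m k) = bil gi k k *: (m^T *m m).
Proof.
rewrite /TTt /outer trmx_mul trmxK.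
have -> : m^T *m k *m gi *m (k^T *m m) = m^T *m (k *m gi *m k^T) *m m.
  by rewrite !mulmxA.
by rewrite [k *m gi *m k^T]mx11_scalar mul_mx_scalar -scalemxAl.
Qed.

Lemma TtT_outer m k : TtT g (outer m k) = bil gi m m *: (k^T *m k).
Proof.
rewrite /TtT /outer trmx_mul trmxK.
have -> : k^T *m m *m gi *m (m^T *m k) = k^T *m (m *m gi *m m^T) *m k.
  by rewrite !mulmxA.
by rewrite [m *m gi *m m^T]mx11_scalar mul_mx_scalar -scalemxAl.
Qed.

Lemma bil_g_raise u m : bil g u (m *m gi) = (u *m m^T) 0 0.
Proof.
by rewrite /bil trmx_mul trmx_ginv !mulmxA -(mulmxA _ g) mulmx_ginv mulmx1.
Qed.

Lemma bil_outer m k u v :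
  bil (outer m k) u v = bil g u (m *m gi) * bil g v (k *m gi).
Proof.
rewrite !bil_g_raise /bil /outer !mulmxA -(mulmxA (u *m m^T)) [LHS]mxE big_ord1.
by congr (_ * _); rewrite -{1}(trmxK k) -trmx_mul mxE.
Qed.

End Metric.

Section Lorentzian.
Variables (R : realType) (n : nat) (g P : 'M[R]_n.+1).
Local Notation eta := (Defs.eta R n.+1).
Hypotheses (P_unit : P \in unitmx) (gE : g = P^T *m eta *m P).
Local Notation gi := (ginv g).
Local Notation Pi := (invmx P).
Implicit Types (T : 'M[R]_n.+1) (k l m u v w : 'rV[R]_n.+1).

Lemma trmx_g : g^T = g.
Proof. by rewrite gE !trmx_mul trmxK trmx_eta mulmxA. Qed.

Lemma g_unit : g \in unitmx.
Proof. by rewrite gE !unitmx_mul unitmx_tr P_unit eta_unit. Qed.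

Lemma ginvE : gi = Pi *m eta *m Pi^T.
Proof.
have gX : g *m (Pi *m eta *m Pi^T) = 1%:M.
  rewrite gE !mulmxA -(mulmxA _ P) mulmxV // mulmx1 -(mulmxA P^T eta eta).
  by rewrite eta_mulmx_eta mulmx1 -trmx_mul mulVmx // trmx1.
by rewrite -[gi]mulmx1 -gX mulmxA ginv_mulmx ?mul1mx // g_unit.
Qed.

Lemma bil_g_eta u v : bil g u v = bil eta (u *m P^T) (v *m P^T).
Proof. by rewrite gE bil_congr. Qed.

Lemma bil_ginv_eta k l : bil gi k l = bil eta (k *m Pi) (l *m Pi).
Proof. by rewrite ginvE -[Pi in Pi *m eta]trmxK bil_congr trmxK. Qed.

Lemma null_cone_sym_det0 (M : 'M[R]_n.+1) : M^T = M -> \det M = 0 ->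
  (forall v, null_vec g v -> bil M v v = 0) -> M = 0.
Proof.
move=> sM detM0 Mnull; pose Q := Pi^T *m M *m Pi.
have MQ : M = P^T *m Q *m P.
  by rewrite /Q !mulmxA -trmx_mul mulVmx // trmx1 mul1mx -mulmxA mulVmx ?mulmx1.
have /eta_null_cone_form QE : Q^T = Q by rewrite /Q !trmx_mul trmxK sM mulmxA.
have {QE} MZ : M = Q 0 0 *: g.
  rewrite MQ {1}QE ?gE -?scalemxAr -?scalemxAl // => x nz_x xx.
  have xK : x *m Pi^T *m P^T = x.
    by rewrite -mulmxA -trmx_mul mulmxV ?trmx1 ?mulmx1.
  rewrite -xK -bil_congr -MQ Mnull //; split; last by rewrite bil_g_eta xK.
  by apply: contraNneq nz_x => x0; rewrite -xK x0 mul0mx.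
have det_g : \det g != 0 by rewrite -unitfE -unitmxE g_unit.
move: detM0; rewrite MZ detZ => /eqP; rewrite mulf_eq0 (negPf det_g) orbF.
by rewrite expf_eq0 => /andP[_ /eqP ->]; rewrite scale0r.
Qed.

Lemma null_cov_orth_parallel k l : null_cov g k ->
  bil gi l l = 0 -> bil gi k l = 0 -> exists c, l = c *: k.
Proof.
case=> nz_k; rewrite !bil_ginv_eta => kk ll kl.
have nz_kPi : k *m Pi != 0 by rewrite mulmx_unit_eq0 ?unitmx_inv.
exists ((l *m Pi) 0 0 / (k *m Pi) 0 0).
move: (eta_null_orth_parallel kk ll kl nz_kPi) => /(congr1 (mulmx^~ P)).
by rewrite -scalemxAl -!mulmxA mulVmx ?mulmx1.
Qed.

Lemma null_cov_exists : (0 < n)%N -> exists k, null_cov g k.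
Proof.
move=> /(@eta_null_exists R)[x nz_x xx]; exists (x *m P); split.
  by rewrite mulmx_unit_eq0.
by rewrite bil_ginv_eta mulmxK.
Qed.

Section TimeOrientation.
Variable tau : 'rV[R]_n.+1.
Hypothesis tau_timelike : timelike g tau.

Lemma timelike_null_neq0 w : null_vec g w -> bil g tau w != 0.
Proof.
move: tau_timelike; rewrite /timelike /null_vec !bil_g_eta => tt [nz_w ww].
have nz_x : w *m P^T != 0 by rewrite mulmx_unit_eq0 ?unitmx_tr.
have ww' : 0 <= bil eta (w *m P^T) (w *m P^T) by rewrite ww.
have := eta_timelike_mul_gt0 tt ww' nz_x.
by apply: contraTneq => ->; rewrite mul0r ltxx.
Qed.

Lemma future_null_sign w u : null_vec g w -> future_causal g tau u ->
  0 <= bil g u w * bil g tau w.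
Proof.
move: tau_timelike; rewrite /timelike /null_vec /future_causal !bil_g_eta.
move=> tt [nz_w ww] [nz_u [uu tu]].
by apply: eta_null_future_sign tt ww _ uu _ tu;
  rewrite mulmx_unit_eq0 ?unitmx_tr.
Qed.

End TimeOrientation.

Let g_sym := trmx_g.
Let g_inv := g_unit.

Lemma TTt_eq0_iff T : TTt g T = 0 <-> singular g T /\ null_cone_preserving g T.
Proof.
split=> [TT0 | [/(singularE g_inv) detT0 ncp]].
  split; last by move=> k _; rewrite (bil_mixed g_sym g_inv) TT0 bil0.
  apply/(singularE g_inv); move: (det_TTt g T); rewrite TT0 det0 => /esym/eqP.
  rewrite mulf_eq0 (negPf (det_ginv_neq0 g_inv)) orbF expf_eq0.
  by case/andP=> _ /eqP.
apply: null_cone_sym_det0.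
- exact: trmx_TTt.
- by rewrite det_TTt detT0 expr0n mul0r.
- by move=> v /ncp; rewrite (bil_mixed g_sym g_inv).
Qed.

Lemma TTt_TtT_eq0_iff T : TTt g T = 0 /\ TtT g T = 0 <->
  singular g T /\ null_cone_bi_preserving g T.
Proof.
split=> [[/TTt_eq0_iff[sT ncp] TtT0] | [sT [ncp bi]]].
  by split=> //; split=> // k _; rewrite (bil_mixed_cov g_sym) TtT0 bil0.
split; first exact/TTt_eq0_iff.
apply: null_cone_sym_det0.
- exact: trmx_TtT.
- by rewrite det_TtT (singularE g_inv T).1 // expr0n mul0r.
move=> v /(null_vec_lower g_sym g_inv)/bi.
by rewrite (bil_mixed_cov g_sym) -mulmxA (mulmx_ginv g_inv) mulmx1.
Qed.

Lemma TTt_eq0_outer T : (0 < n)%N ->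
  TTt g T = 0 <-> exists s k, null_cov g k /\ T = outer s k.
Proof.
move=> n_gt0; split=> [TT0 | [s [k [[_ kk] ->]]]]; last first.
  by rewrite TTt_outer kk scale0r.
have rowsT i j : bil gi (row i T) (row j T) = 0.
  by rewrite bil_row -[T *m _ *m _]/(TTt g T) TT0 mxE.
have [->|/matrix0Pn[j [b Tjb]]] := eqVneq T 0.
  have [k nk] := null_cov_exists n_gt0.
  by exists 0, k; rewrite /outer trmx0 mul0mx.
have nk : null_cov g (row j T).
  by split; rewrite ?rowsT //; apply/rV0Pn; exists b; rewrite mxE.
have /fin_all_exists[c rowTE] i : exists c, row i T = c *: row j T.
  exact: null_cov_orth_parallel nk (rowsT i i) (rowsT j i).
exists (\row_i c i), (row j T); split=> //.
apply/matrixP => a b'; rewrite /outer !mxE big_ord1 !mxE.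
by move/rowP/(_ b'): (rowTE a); rewrite !mxE.
Qed.

Lemma TTt_TtT_eq0_outer T : (0 < n)%N ->
  TTt g T = 0 /\ TtT g T = 0 <->
  (exists m k, null_cov g m /\ null_cov g k /\ T = outer m k) \/ T = 0.
Proof.
move=> n_gt0; split=> [[] | ].
  move=> /(TTt_eq0_outer _ n_gt0)[s [k [[nz_k kk] ->]]] TtT0.
  have [->|nz_s] := eqVneq s 0; first by right; rewrite /outer trmx0 mul0mx.
  left; exists s, k; do !split=> //.
  have /rV0Pn[b kb] := nz_k; move/matrixP/(_ b b): TtT0.
  rewrite TtT_outer !mxE big_ord1 !mxE => /eqP.
  by rewrite mulf_eq0 mulf_eq0 orbb (negPf kb) orbF => /eqP.
case=> [[m [k [[_ mm] [[_ kk] ->]]]] | ->].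
  by rewrite TTt_outer TtT_outer mm kk !scale0r.
by rewrite /TTt /TtT trmx0 !mulmx0.
Qed.

Lemma outer_null_DP tau m k : timelike g tau ->
  null_cov g m -> null_cov g k ->
  DP g tau (outer m k) \/ DP g tau (- outer m k).
Proof.
move=> tau_tl /(null_cov_raise g_sym g_inv) nm /(null_cov_raise g_sym g_inv) nk.
have sm := future_null_sign tau_tl nm.
have sk := future_null_sign tau_tl nk.
have := mulf_neq0 (timelike_null_neq0 tau_tl nm) (timelike_null_neq0 tau_tl nk).
rewrite neq_lt => /orP[neg | pos]; [right | left] => u v /sm su /sk sv.
  rewrite bilN (bil_outer g_sym g_inv) oppr_ge0; nra.
rewrite (bil_outer g_sym g_inv); nra.
Qed.

End Lorentzian.

Theorem mainTheorem11 (R : realType) (N : nat) (g : 'M[R]_N)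
    (tau : 'rV[R]_N) (T : 'M[R]_N) :
  (3 <= N)%N -> lorentzian g -> timelike g tau ->
  (* (a) *)
  ((TTt g T = 0 <-> singular g T /\ null_cone_preserving g T) /\
   (singular g T /\ null_cone_preserving g T <->
      exists s k : 'rV[R]_N, null_cov g k /\ T = outer s k)) /\
  (* (b) *)
  ((TTt g T = 0 /\ TtT g T = 0 <->
      singular g T /\ null_cone_bi_preserving g T) /\
   (singular g T /\ null_cone_bi_preserving g T <->
      (exists n k : 'rV[R]_N, null_cov g n /\ null_cov g k /\ T = outer n k)
      \/ T = 0)) /\
  (* in case (b), T in DP u -DP *)
  (TTt g T = 0 /\ TtT g T = 0 -> DP g tau T \/ DP g tau (- T)).
Proof.
case: N g tau T => [|n] g tau T // N3 [_ [P [P_unit gE]]] tau_tl.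
have n_gt0 : (0 < n)%N by rewrite -ltnS (leq_trans _ N3).
have A1 := TTt_eq0_iff P_unit gE T.
have A2 := TTt_eq0_outer P_unit gE T n_gt0.
have B1 := TTt_TtT_eq0_iff P_unit gE T.
have B2 := TTt_TtT_eq0_outer P_unit gE T n_gt0.
split; [split | split; [split | ]].
- exact: A1.
- exact: iff_trans (iff_sym A1) A2.
- exact: B1.
- exact: iff_trans (iff_sym B1) B2.
- move=> /B2[[m [k [nm [nk ->]]]] | ->]; last by left=> u v _ _; rewrite bil0.
  exact: outer_null_DP P_unit gE _ _ _ tau_tl nm nk.
Qed.
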